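(* Let $a<b$ and let $f:[a,b]\rightarrow\mathbb{R}$ be a twice continuously differentiable mapping in $(a,b)$ with $f''\in L^2[a,b]$. Then \[ \left|\frac{f\left(\frac{3a+b}{4}\right)+f\left(\frac{a+3b}{4}\right)}{2} -\frac{1}{b-a}\int_{a}^{b}f(t)\,dt\right|\leq \frac{(b-a)^{3/2}}{4\sqrt{3}\pi}\|f''\|_2. \]
   Context: $\|g\|_2=\left(\int_a^b g(t)^2\,dt\right)^{1/2}$. *)

From HB Require Import structures.
From mathcomp Require Import all_boot all_order all_algebra.
From mathcomp Require Import all_classical all_reals all_analysis.
Set Implicit Arguments. Unset Strict Implicit. Unset Printing Implicit Defensive.

From HB Require Import structures.
From mathcomp Require Import all_boot all_order all_algebra.
From mathcomp Require Import all_classical all_reals all_analysis.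
From mathcomp Require Import ring lra measurable_realfun.
Import Order.TTheory GRing.Theory Num.Theory.
Import numFieldNormedType.Exports.
Local Open Scope classical_set_scope.
Local Open Scope ring_scope.

(* For c in (a, b), Cauchy-Schwarz gives |f'(s) - f'(c)| <= ||f''|| sqrt |s - c|,
   and AM-GM turns this into the polynomial majorant ||f''|| (|s - c| / k + k) / 2
   for any k > 0.  Integrating twice yields a Taylor estimate for f around each
   quarter point, hence an error bound for the midpoint rule on each half of [a, b].
   Optimizing k gives the constant (b - a)^(3/2) / (16 sqrt 3), which is below the
   claimed one because pi <= 4. *)

Section real_lemmas.
Context {R : realType}.
Local Notation mu := (@lebesgue_measure R).
Implicit Types (u v w : R) (g : R -> R).

Lemma normB_le_majorant (G P dG dP : R -> R) u v : u <= v ->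
  (forall x, x \in `]u, v[ -> is_derive x 1 G (dG x)) ->
  (forall x, x \in `]u, v[ -> is_derive x 1 P (dP x)) ->
  {within `[u, v], continuous G} -> {within `[u, v], continuous P} ->
  {in `]u, v[, forall x, `|dG x| <= dP x} ->
  `|G v - G u| <= P v - P u.
Proof.
move=> uv dG' dP' cG cP dGP.
have nondecr (S dS : R -> R) : (forall x, x \in `]u, v[ -> is_derive x 1 S (dS x)) ->
    {within `[u, v], continuous S} -> {in `]u, v[, forall x, 0 <= dS x} ->
    S u <= S v.
  move=> dS' cS dS0; apply: (ger0_derive1_le_cc _ _ cS) => //.
  - by move=> x /dS'/@ex_derive.
  - by move=> x xuv; have := dS' x xuv; rewrite derive1E => -[_ ->]; exact: dS0.
  - by rewrite in_itv/= lexx uv.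
  - by rewrite in_itv/= lexx uv.
have dGP' x : x \in `]u, v[ -> - dP x <= dG x <= dP x by move=> /dGP; rewrite ler_norml.
have PG : P u - G u <= P v - G v.
  apply: (@nondecr (P - G) (dP - dG)).
  - by move=> x xuv; exact: (is_deriveB (dP' x xuv) (dG' x xuv)).
  - by move=> x; exact: (continuousB (cP x) (cG x)).
  - by move=> x /dGP' /andP[_]; rewrite /= subr_ge0.
have PG' : P u + G u <= P v + G v.
  apply: (@nondecr (P + G) (dP + dG)).
  - by move=> x xuv; exact: (is_deriveD (dP' x xuv) (dG' x xuv)).
  - by move=> x; exact: (continuousD (cP x) (cG x)).
  - by move=> x /dGP' /andP[]; rewrite /= -subr_ge0 opprK addrC.
by rewrite ler_norml; apply/andP; split; lra.
Qed.

Lemma Rintegral_derive1 (F g : R -> R) u v : u < v ->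
  {in `[u, v], forall x, derivable F x 1} -> {within `[u, v], continuous g} ->
  {in `]u, v[, derive1 F =1 g} ->
  \int[mu]_(x in `[u, v]) g x = F v - F u.
Proof.
move=> uv dF cg Fg; rewrite /Rintegral (@continuous_FTC2 _ _ F _ _ uv cg) //.
have [cFu cFv] : {for u, continuous F} /\ {for v, continuous F}.
  by split; apply/differentiable_continuous/derivable1_diffP/dF;
    rewrite in_itv/= lexx ltW.
split.
- by move=> x xuv; apply: dF; apply: subset_itv_oo_cc.
- exact: cvg_at_right_filter.
- exact: cvg_at_left_filter.
Qed.

Lemma within_continuous_quadratic (al be ga c : R) (A : set R) :
  {within A, continuous (fun x => al * (x - c) ^+ 2 + be * (x - c) + ga)}.
Proof.
by apply: continuous_subspaceT => x; exact/differentiable_continuous/derivable1_diffP.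
Qed.

Lemma Rintegral_quadratic (al be ga c u v : R) : u < v ->
  \int[mu]_(x in `[u, v]) (al * (x - c) ^+ 2 + be * (x - c) + ga) =
  al / 3 * ((v - c) ^+ 3 - (u - c) ^+ 3) + be / 2 * ((v - c) ^+ 2 - (u - c) ^+ 2)
  + ga * (v - u).
Proof.
move=> uv; pose F s := al / 3 * (s - c) ^+ 3 + be / 2 * (s - c) ^+ 2 + ga * s.
have dF (s : R) : is_derive s 1 F (al * (s - c) ^+ 2 + be * (s - c) + ga).
  by apply: is_derive_eq; rewrite /GRing.scale/=; field.
rewrite (@Rintegral_derive1 F (fun x => al * (x - c) ^+ 2 + be * (x - c) + ga))//.
- by rewrite /F; ring.
- exact: within_continuous_quadratic.
- by move=> s _; rewrite derive1E; have [_ ->] := dF s.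
Qed.

Lemma Rintegral_itv_split g u w v : u <= w <= v ->
  mu.-integrable `[u, v] (EFin \o g) ->
  \int[mu]_(x in `[u, v]) g x =
  \int[mu]_(x in `[u, w]) g x + \int[mu]_(x in `[w, v]) g x.
Proof.
move=> /andP[uw wv] ig.
have := @Rintegral_itvB R g (BLeft u) (BRight v) w ig.
rewrite !bnd_simp => /(_ uw wv); rewrite Rintegral_itv_obnd_cbnd.
  by move=> <-; ring.
by apply: integrableS ig => //; apply: subset_itv; rewrite bnd_simp.
Qed.

Lemma sqr_Rintegral_le g u v : u < v -> {within `[u, v], continuous g} ->
  (\int[mu]_(x in `[u, v]) g x) ^+ 2 <=
  (v - u) * \int[mu]_(x in `[u, v]) g x ^+ 2.
Proof.
move=> uv cg; set A := \int[mu]_(x in _) g x; set B := \int[mu]_(x in _) _.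
have vu0 : 0 < v - u by rewrite subr_gt0.
have ic (h : R -> R) : {within `[u, v], continuous h} ->
    mu.-integrable `[u, v] (EFin \o h).
  by move=> ch; apply: continuous_compact_integrable => //; exact: segment_compact.
have cst (r : R) : {within `[u, v], continuous (fun _ : R => r)}.
  by move=> x; exact: cvg_cst.
have cM (h k : R -> R) : {within `[u, v], continuous h} ->
    {within `[u, v], continuous k} -> {within `[u, v], continuous (h \* k)}.
  by move=> ch ck x; exact: (continuousM (ch x) (ck x)).
pose m := A / (v - u).
have muE : fine (mu `[u, v]) = v - u by rewrite lebesgue_measure_itv/= lte_fin uv.
(* the variance of g about its mean m is nonnegative *)
have : 0 <= \int[mu]_(x in `[u, v]) (g x - m) ^+ 2.
  by apply: Rintegral_ge0 => x _; exact: sqr_ge0.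
have -> : \int[mu]_(x in `[u, v]) (g x - m) ^+ 2 = B - 2 * m * A + m ^+ 2 * (v - u).
  have -> : (fun x => (g x - m) ^+ 2) = (fun x => g x ^+ 2 + (- (2 * m) * g x + m ^+ 2)).
    by apply: funext => x; ring.
  have cg2 : {within `[u, v], continuous (fun x => g x ^+ 2)} by exact: cM.
  have cgm : {within `[u, v], continuous (fun x => - (2 * m) * g x)} by exact: cM.
  rewrite RintegralD// ?RintegralD// ?RintegralZl// ?Rintegral_cst//;
    [|exact: ic..|by apply: ic => x; exact: (continuousD (cgm x) (cst _ x))].
  by rewrite -/B -/A muE /m; field; rewrite gt_eqF.
move=> h; rewrite -subr_ge0.
have -> : (v - u) * B - A ^+ 2 = (v - u) * (B - 2 * m * A + m ^+ 2 * (v - u)).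
  by rewrite /m; field; rewrite gt_eqF.
exact: mulr_ge0 (ltW vu0) h.
Qed.

Lemma normr_RintegralB_le (F P Q : R -> R) u v : u <= v ->
  mu.-integrable `[u, v] (EFin \o F) ->
  {within `[u, v], continuous P} -> {within `[u, v], continuous Q} ->
  {in `]u, v[, forall x, `|F x - P x| <= Q x} ->
  `|\int[mu]_(x in `[u, v]) F x - \int[mu]_(x in `[u, v]) P x|
    <= \int[mu]_(x in `[u, v]) Q x.
Proof.
move=> uv iF cP cQ FPQ.
have ic h : {within `[u, v], continuous h} -> mu.-integrable `[u, v] (EFin \o h).
  by move=> ch; apply: continuous_compact_integrable => //; exact: segment_compact.
have sub : `]u, v[ `<=` `[u, v] by apply: subset_itv; rewrite bnd_simp.
have iFP : mu.-integrable `]u, v[ (EFin \o (F \- P)).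
  by apply: integrableS (integrableB _ iF (ic _ cP)).
have iQ : mu.-integrable `]u, v[ (EFin \o Q) by apply: integrableS (ic _ cQ).
(* the endpoints are negligible, so the estimate on the open interval suffices *)
have oo h : mu.-integrable `]u, v[ (EFin \o h) ->
    \int[mu]_(x in `[u, v]) h x = \int[mu]_(x in `]u, v[) h x.
  move=> /integrableP[/measurable_EFinP mh _]; congr fine.
  by rewrite (@integral_itv_bndoo R u v (EFin \o h) true false)//; exact/measurable_EFinP.
rewrite -RintegralB// ?ic// (oo (F \- P))// (oo Q)//.
apply: le_trans (le_normr_Rintegral _ iFP) _ => //.
by apply: le_Rintegral => //; exact: integrable_norm.
Qed.

Lemma le_amgm_of_sqr_le (y t N k : R) : 0 < k -> 0 <= N -> 0 <= t -> 0 <= y ->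
  y ^+ 2 <= t * N ^+ 2 -> y <= N * (t / k + k) / 2.
Proof.
move=> k0 N0 t0 y0 yt.
have B0 : 0 <= N * (t / k + k) / 2 by rewrite divr_ge0// mulr_ge0// addr_ge0 ?divr_ge0// ltW.
rewrite -(ler_pXn2r (n := 2)) ?nnegrE//; apply: le_trans yt _.
have -> : (N * (t / k + k) / 2) ^+ 2 = t * N ^+ 2 + N ^+ 2 * (t / k - k) ^+ 2 / 4.
  by field; rewrite gt_eqF.
by rewrite lerDl divr_ge0// mulr_ge0// sqr_ge0.
Qed.

Lemma powR_3half u : 0 <= u -> u `^ (3 / 2) = u * Num.sqrt u.
Proof.
move=> u0; rewrite (_ : 3 / 2 = 1 + 2^-1); last by field.
rewrite powRD ?powRr1 ?powR12_sqrt// gt_eqF// ltr_wpDr// ?invr_ge0//.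
Qed.

End real_lemmas.

Lemma Rintegral_le_subset {d} {T : measurableType d} {R : realType}
    (mu : {measure set T -> \bar R}) (D E : set T) (h : T -> R) :
  measurable D -> measurable E -> D `<=` E -> measurable_fun E h ->
  (forall x, E x -> 0 <= h x) -> (\int[mu]_(x in E) (h x)%:E < +oo)%E ->
  \int[mu]_(x in D) h x <= \int[mu]_(x in E) h x.
Proof.
move=> mD mE DE mh h0 fin.
have h0' x : E x -> (0 <= (h x)%:E)%E by move=> /h0; rewrite lee_fin.
have le : (\int[mu]_(x in D) (h x)%:E <= \int[mu]_(x in E) (h x)%:E)%E.
  by apply: ge0_subset_integral => //; exact/measurable_EFinP.
rewrite /Rintegral fine_le//.
- rewrite ge0_fin_numE ?(le_lt_trans le fin)//.
  by apply: integral_ge0 => x /DE; exact: h0'.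
- by rewrite ge0_fin_numE//; exact: integral_ge0.
Qed.

Section taylor_estimates.
Context {R : realType} (a b : R) (f : R -> R).
Hypothesis ab : a < b.
Hypothesis df : forall x, a < x < b -> derivable f x 1.
Hypothesis d2f : forall x, a < x < b -> derivable (derive1 f) x 1.
Hypothesis c2f : forall x, a < x < b -> {for x, continuous (derive1 (derive1 f))}.
Hypothesis m2f : measurable_fun `[a, b] (derive1 (derive1 f)).
Hypothesis fin2f :
  (\int[lebesgue_measure]_(t in `[a, b]) ((derive1 (derive1 f) t) ^+ 2)%:E < +oo)%E.

Local Notation mu := (@lebesgue_measure R).
Local Notation f1 := (derive1 f).
Local Notation f2 := (derive1 f1).
Local Notation N := (Num.sqrt (\int[mu]_(t in `[a, b]) f2 t ^+ 2)).

Let sqr_N : N ^+ 2 = \int[mu]_(t in `[a, b]) f2 t ^+ 2.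
Proof. by rewrite sqr_sqrtr//; apply: Rintegral_ge0 => t _; exact: sqr_ge0. Qed.

Let N_ge0 : 0 <= N. Proof. exact: sqrtr_ge0. Qed.

Lemma sqr_derive1_sub_le c s : a < c < b -> a < s < b ->
  (f1 s - f1 c) ^+ 2 <= `|s - c| * N ^+ 2.
Proof.
move=> hc hs; wlog cs : c s hc hs / c < s.
  move=> H; case: (ltgtP c s) => [/H|/H|->]; first exact.
  - by rewrite -sqrrN opprB distrC; apply.
  - by rewrite !subrr expr0n normr0 mul0r.
move: hc hs => /andP[ac cb] /andP[_ sb].
have cs_ab x : c <= x <= s -> a < x < b.
  by move=> /andP[cx xs]; rewrite (lt_le_trans ac cx) (le_lt_trans xs sb).
have f2_cont : {within `[c, s], continuous f2}.
  apply: continuous_in_subspaceT => x; rewrite inE/= in_itv/= => /cs_ab; exact: c2f.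
rewrite -(@Rintegral_derive1 _ f1 f2) //; last first.
  by move=> x; rewrite in_itv/= => /cs_ab/d2f.
apply: le_trans (sqr_Rintegral_le _ _ _ cs f2_cont) _.
rewrite gtr0_norm ?subr_gt0// sqr_N ler_pM2l ?subr_gt0//.
apply: Rintegral_le_subset => //.
- by apply: subset_itv; rewrite bnd_simp ltW.
- exact: measurable_funX.
- by move=> x _; exact: sqr_ge0.
Qed.

Lemma derive1_sub_le k c s : 0 < k -> a < c < b -> a < s < b ->
  `|f1 s - f1 c| <= N * (`|s - c| / k + k) / 2.
Proof.
move=> k0 hc hs; apply: le_amgm_of_sqr_le => //.
by rewrite real_normK ?num_real// sqr_derive1_sub_le.
Qed.

Lemma taylor1_sub_le k c x : 0 < k -> a < c < b -> a < x < b ->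
  `|f x - f c - f1 c * (x - c)| <= N * ((x - c) ^+ 2 / (4 * k) + k * `|x - c| / 2).
Proof.
move=> k0 hc hx.
pose G s := f s - f1 c * s.
(* [P e] majorizes [G] between [c] and [x] when [e] is the sign of [x - c] *)
pose P e s := N * (e * (s - c) ^+ 2 / (4 * k) + k * s / 2).
have dG s : a < s < b -> is_derive s 1 G (f1 s - f1 c).
  move=> /df/derivableP; rewrite -derive1E => dfs.
  by apply: is_derive_eq; rewrite /GRing.scale/=; ring.
have dP (e s : R) : is_derive s 1 (P e) (N * (e * (s - c) / (2 * k) + k / 2)).
  by apply: is_derive_eq; rewrite /GRing.scale/=; field; rewrite gt_eqF.
have GP (u v e : R) : u <= v -> a < u -> v < b ->
    {in `]u, v[, forall s, `|s - c| = e * (s - c)} ->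
    `|G v - G u| <= P e v - P e u.
  move=> uv au vb se.
  have uv_ab s : s \in `[u, v] -> a < s < b.
    rewrite in_itv/= => /andP[us sv].
    by rewrite (lt_le_trans au us) (le_lt_trans sv vb).
  apply: (@normB_le_majorant _ G (P e) (fun s => f1 s - f1 c)
    (fun s => N * (e * (s - c) / (2 * k) + k / 2)) u v uv) => //.
  - by move=> s /subset_itv_oo_cc/uv_ab/dG.
  - by apply: derivable_within_continuous => s /uv_ab/dG[].
  - by apply: derivable_within_continuous => s _; case: (dP e s).
  - move=> s sI; apply: le_trans (derive1_sub_le _ _ _ k0 _ _) _ => //.
      exact/uv_ab/subset_itv_oo_cc.
    by rewrite se// le_eqVlt; apply/orP; left; apply/eqP; field; rewrite gt_eqF.
have [cx|xc] := leP c x.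
- have -> : f x - f c - f1 c * (x - c) = G x - G c by rewrite /G; ring.
  have -> : N * ((x - c) ^+ 2 / (4 * k) + k * `|x - c| / 2) = P 1 x - P 1 c.
    by rewrite /P ger0_norm ?subr_ge0//; field; rewrite gt_eqF.
  apply: GP cx (andP hc).1 (andP hx).2 _ => s.
  by rewrite in_itv/= mul1r => /andP[cs _]; rewrite gtr0_norm ?subr_gt0.
- have -> : `|f x - f c - f1 c * (x - c)| = `|G c - G x|.
    by rewrite distrC /G; congr `|_|; ring.
  have -> : N * ((x - c) ^+ 2 / (4 * k) + k * `|x - c| / 2) = P (-1) c - P (-1) x.
    by rewrite /P ltr0_norm ?subr_lt0//; field; rewrite gt_eqF.
  apply: GP (ltW xc) (andP hx).1 (andP hc).2 _ => s.
  by rewrite in_itv/= mulN1r => /andP[_ sc]; rewrite ltr0_norm ?subr_lt0.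
Qed.

Lemma f_bounded : exists M, forall x, a <= x <= b -> `|f x| <= M.
Proof.
pose c := (a + b) / 2.
have hc : a < c < b by have := mid_in_itvoo ab; rewrite in_itv.
pose M0 := `|f c| + `|f1 c| * (b - a) + N * ((b - a) ^+ 2 / 4 + (b - a) / 2).
have ba0 : 0 <= b - a by rewrite subr_ge0 ltW.
have M0_ge0 : 0 <= M0.
  apply: addr_ge0; first by apply: addr_ge0 => //; exact: mulr_ge0.
  by apply/mulr_ge0/addr_ge0 => //; apply: divr_ge0 => //; exact: sqr_ge0.
(* [f] is only controlled inside [(a, b)]; the endpoint values are added separately *)
exists (`|f a| + `|f b| + M0) => x /andP[ax xb].
have [->|xa] := eqVneq x a; first by have := normr_ge0 (f b); lra.
have [->|xb'] := eqVneq x b; first by have := normr_ge0 (f a); lra.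
have hx : a < x < b by rewrite !lt_neqAle eq_sym xa xb' ax xb.
have xc : `|x - c| <= b - a by rewrite ler_norml; apply/andP; split; rewrite /c; lra.
have xc2 : (x - c) ^+ 2 <= (b - a) ^+ 2.
  by rewrite -real_normK ?num_real// lerXn2r// ?nnegrE// subr_ge0 ltW.
have taylor := taylor1_sub_le 1 c x ltr01 hc hx.
have tri : `|f x| <= `|f x - f c - f1 c * (x - c)| + `|f c| + `|f1 c| * `|x - c|.
  rewrite -normrM {1}(_ : f x = f x - f c - f1 c * (x - c) + f c + f1 c * (x - c)).
    by apply: le_trans (ler_normD _ _) _; rewrite lerD2r ler_normD.
  by ring.
have t1 : `|f1 c| * `|x - c| <= `|f1 c| * (b - a) by exact: ler_wpM2l.
have t2 : N * ((x - c) ^+ 2 / (4 * 1) + 1 * `|x - c| / 2) <=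
    N * ((b - a) ^+ 2 / 4 + (b - a) / 2).
  by rewrite mulr1 mul1r ler_wpM2l// lerD// ler_pM2r.
have := normr_ge0 (f a); have := normr_ge0 (f b); rewrite /M0; lra.
Qed.

Lemma f_integrable : mu.-integrable `[a, b] (EFin \o f).
Proof.
apply: measurable_bounded_integrable => //.
- by apply: compact_finite_measure; exact: segment_compact.
- apply: (@measurable_fun_itv_cc _ _ _ false true).
  apply: open_continuous_measurable_fun; first exact: interval_open.
  move=> x; rewrite inE/= in_itv/= => /df.
  by move=> /derivable1_diffP/differentiable_continuous.
- have [M fM] := f_bounded; exists M; split; first exact: num_real.
  by move=> y My x; rewrite /= in_itv/= => /fM /le_trans; apply; exact: ltW.
Qed.

Lemma midpoint_error_le k c h : 0 < k -> 0 < h -> a <= c - h -> c + h <= b ->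
  `|\int[mu]_(x in `[c - h, c + h]) f x - 2 * h * f c|
    <= N * (h ^+ 3 / (6 * k) + k * h ^+ 2 / 2).
Proof.
move=> k0 h0 ach chb.
have hc : a < c < b by apply/andP; split; lra.
(* [T] and [Q e] are written in the shape required by [Rintegral_quadratic] *)
pose T x := 0 * (x - c) ^+ 2 + f1 c * (x - c) + f c.
pose Q e x := N / (4 * k) * (x - c) ^+ 2 + N * k * e / 2 * (x - c) + 0.
have half u v e : u < v -> a <= u -> v <= b ->
    {in `]u, v[, forall x, `|x - c| = e * (x - c)} ->
    `|\int[mu]_(x in `[u, v]) f x - \int[mu]_(x in `[u, v]) T x|
      <= \int[mu]_(x in `[u, v]) Q e x.
  move=> uv au vb xc; apply: normr_RintegralB_le (ltW uv) _ _ _ _.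
  - by apply: integrableS f_integrable => //; apply: subset_itv; rewrite bnd_simp.
  - exact: within_continuous_quadratic.
  - exact: within_continuous_quadratic.
  move=> x; rewrite in_itv/= => /andP[ux xv].
  have hx : a < x < b by rewrite (le_lt_trans au ux) (lt_le_trans xv vb).
  have -> : f x - T x = f x - f c - f1 c * (x - c) by rewrite /T; ring.
  apply: le_trans (taylor1_sub_le k c x k0 hc hx) _.
  suff -> : Q e x = N * ((x - c) ^+ 2 / (4 * k) + k * `|x - c| / 2) by [].
  by rewrite xc ?in_itv/= ?ux// /Q; field; rewrite gt_eqF.
have cl : c - h < c by lra.
have cr : c < c + h by lra.
have IT_l : \int[mu]_(x in `[c - h, c]) T x = h * f c - f1 c * h ^+ 2 / 2.
  by rewrite /T Rintegral_quadratic//; field.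
have IT_r : \int[mu]_(x in `[c, c + h]) T x = h * f c + f1 c * h ^+ 2 / 2.
  by rewrite /T Rintegral_quadratic//; field.
have IQ_l : \int[mu]_(x in `[c - h, c]) Q (-1) x = N * (h ^+ 3 / (12 * k) + k * h ^+ 2 / 4).
  by rewrite /Q Rintegral_quadratic//; field; rewrite gt_eqF.
have IQ_r : \int[mu]_(x in `[c, c + h]) Q 1 x = N * (h ^+ 3 / (12 * k) + k * h ^+ 2 / 4).
  by rewrite /Q Rintegral_quadratic//; field; rewrite gt_eqF.
rewrite (Rintegral_itv_split _ (c - h) c (c + h)) ?(ltW cl) ?(ltW cr)//; last first.
  by apply: integrableS f_integrable => //; apply: subset_itv; rewrite bnd_simp.
set J1 := \int[mu]_(x in `[c - h, c]) f x; set J2 := \int[mu]_(x in `[c, c + h]) f x.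
set B := N * (h ^+ 3 / (12 * k) + k * h ^+ 2 / 4) in IQ_l IQ_r *.
have Hl : `|J1 - (h * f c - f1 c * h ^+ 2 / 2)| <= B.
  rewrite -IT_l -IQ_l; apply: half cl ach (ltW (andP hc).2) _ => x.
  by rewrite in_itv/= mulN1r => /andP[_ xc]; rewrite ltr0_norm ?subr_lt0.
have Hr : `|J2 - (h * f c + f1 c * h ^+ 2 / 2)| <= B.
  rewrite -IT_r -IQ_r; apply: half cr (ltW (andP hc).1) chb _ => x.
  by rewrite in_itv/= mul1r => /andP[cx _]; rewrite gtr0_norm ?subr_gt0.
have -> : N * (h ^+ 3 / (6 * k) + k * h ^+ 2 / 2) = B + B.
  by rewrite /B; field; rewrite gt_eqF.
have -> : J1 + J2 - 2 * h * f c =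
    (J1 - (h * f c - f1 c * h ^+ 2 / 2)) + (J2 - (h * f c + f1 c * h ^+ 2 / 2)).
  by ring.
exact: le_trans (ler_normD _ _) (lerD Hl Hr).
Qed.

Lemma quarter_points_error_le k : 0 < k ->
  `|(f ((3 * a + b) / 4) + f ((a + 3 * b) / 4)) / 2
    - (b - a)^-1 * \int[mu]_(x in `[a, b]) f x|
  <= N * ((b - a) ^+ 2 / (192 * k) + k * (b - a) / 16).
Proof.
move=> k0; pose h := (b - a) / 4; pose m := (a + b) / 2.
have L0 : 0 < b - a by rewrite subr_gt0.
have h0 : 0 < h by rewrite divr_gt0.
set c1 := (3 * a + b) / 4; set c3 := (a + 3 * b) / 4.
have [e1 e2 e3 e4] : [/\ c1 - h = a, c1 + h = m, c3 - h = m & c3 + h = b].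
  by split; rewrite /c1 /c3 /h /m; field.
have M1 := midpoint_error_le k c1 h k0 h0; rewrite e1 e2 in M1.
have M3 := midpoint_error_le k c3 h k0 h0; rewrite e3 e4 in M3.
have am : a <= m <= b by rewrite /m; apply/andP; split; lra.
rewrite (Rintegral_itv_split _ a m b am f_integrable).
set J1 := \int[mu]_(x in `[a, m]) f x; set J3 := \int[mu]_(x in `[m, b]) f x.
have -> : (f c1 + f c3) / 2 - (b - a)^-1 * (J1 + J3) =
    - ((J1 - 2 * h * f c1) + (J3 - 2 * h * f c3)) / (b - a).
  by rewrite /h; field; rewrite gt_eqF.
rewrite normrM normrN normfV (gtr0_norm L0) ler_pdivrMr//.
have -> : N * ((b - a) ^+ 2 / (192 * k) + k * (b - a) / 16) * (b - a) =
    N * (h ^+ 3 / (6 * k) + k * h ^+ 2 / 2) + N * (h ^+ 3 / (6 * k) + k * h ^+ 2 / 2).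
  by rewrite /h; field; rewrite gt_eqF.
by apply: le_trans (ler_normD _ _) (lerD (M1 _ _) (M3 _ _)); lra.
Qed.

End taylor_estimates.

Theorem corollary2p5 (R : realType) (a b : R) (f : R -> R) :
  a < b ->
  (forall x, a < x < b -> derivable f x 1) ->
  (forall x, a < x < b -> derivable (derive1 f) x 1) ->
  (forall x, a < x < b -> {for x, continuous (derive1 (derive1 f))}) ->
  measurable_fun `[a, b] (derive1 (derive1 f)) ->
  (\int[lebesgue_measure]_(t in `[a, b]) ((derive1 (derive1 f) t) ^+ 2)%:E < +oo)%E ->
  `| (f ((3 * a + b) / 4) + f ((a + 3 * b) / 4)) / 2
     - (b - a)^-1 * Rintegral lebesgue_measure `[a, b] f |
  <= (b - a) `^ (3 / 2) / (4 * Num.sqrt 3 * pi)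
     * Num.sqrt (Rintegral lebesgue_measure `[a, b]
                   (fun t => (derive1 (derive1 f) t) ^+ 2)).
Proof.
move=> ab df d2f c2f m2f fin2f.
have L0 : 0 < b - a by rewrite subr_gt0.
set s := Num.sqrt (b - a); set t := Num.sqrt 3.
have s0 : 0 < s by rewrite sqrtr_gt0.
have t0 : 0 < t by rewrite sqrtr_gt0.
have Ls : b - a = s ^+ 2 by rewrite sqr_sqrtr// ltW.
have t3 : t ^+ 2 = 3 by rewrite sqr_sqrtr.
(* the optimal choice [k = sqrt ((b - a) / 12)] balances the two error terms *)
pose k := s / (2 * t).
have k0 : 0 < k by rewrite divr_gt0// mulr_gt0.
apply: le_trans (quarter_points_error_le a b f ab df d2f c2f m2f fin2f k k0) _.
rewrite (powR_3half _ (ltW L0)) -/s [X in _ <= X]mulrC ler_wpM2l ?sqrtr_ge0// Ls.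
have -> : (s ^+ 2) ^+ 2 / (192 * k) + k * s ^+ 2 / 16 = s ^+ 3 / (4 * t) / 4.
  have -> : (s ^+ 2) ^+ 2 / (192 * k) + k * s ^+ 2 / 16 =
      s ^+ 3 / (4 * t) / 4 + s ^+ 3 * (t ^+ 2 - 3) / (96 * t).
    by rewrite /k; field; rewrite !gt_eqF.
  by rewrite t3 subrr mulr0 mul0r addr0.
have pi4 : pi <= 4 :> R by have := @pihalf_lt2 R; lra.
move: (@pi_gt0 R) pi4; move: (@pi R) => p p0 p4.
have -> : s ^+ 2 * s / (4 * t * p) = s ^+ 3 / (4 * t) / p.
  by field; rewrite (gt_eqF p0) (gt_eqF t0).
by rewrite ler_pM2l ?divr_gt0 ?exprn_gt0 ?mulr_gt0// lef_pV2 ?posrE.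
Qed.
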